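(* Let $S=\{\rho_1=0<\rho_2<\cdots\}$ be an Arf numerical semigroup with conductor $c=\rho_r$. Let $d$ be an odd integer with $1\le d\le 2r-3$, write $d=2t+1$, and put $p_t=c+\rho_{t+1}-1$. Then $$\{\rho\in[0,p_t]\cap S:\ \beta(\rho)\ge t+1\}=\{\rho_{t+1}+\rho_{t+1},\ \rho_{t+1}+\rho_{t+2},\ \dots,\ \rho_{t+1}+\rho_{r-1}\}.$$
   Context: A numerical semigroup is a submonoid $S$ of $(\mathbb{N}_0,+)$ with finite complement, with elements listed increasingly. $S$ is Arf if $\rho_i+\rho_j-\rho_k\in S$ for all positive integers $i\ge j\ge k$. The conductor $c$ is the smallest integer such that all integers $\ge c$ lie in $S$, with $c=\rho_r$. For $\rho\in S$: $A[\rho]=\{p\in S:\ \rho-p\in S\}$ and $\beta(\rho)=\max\{j\ge1:\ \rho_1,\dots,\rho_j\in A[\rho]\ \text{and}\ 2\rho_j\le\rho\}$. *)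

From mathcomp Require Import all_boot.
Set Implicit Arguments. Unset Strict Implicit. Unset Printing Implicit Defensive.

(* The field [nsg_bound] is some witness that every n >= nsg_bound lies in S;
   all derived notions below are independent of the chosen witness. *)
Record numsg := NumSG {
  nsg_mem : pred nat;
  nsg_bound : nat;
  nsg_0 : nsg_mem 0;
  nsg_add : forall a b, nsg_mem a -> nsg_mem b -> nsg_mem (a + b);
  nsg_cofinite : forall n, nsg_bound <= n -> nsg_mem n }.

(* rho S i = the i-th element of S listed increasingly, 1-indexed
   (rho S 1 = 0).  The i-th element is < nsg_bound S + i, so the list below
   contains it. *)
Definition rho (S : numsg) (i : nat) : nat :=
  nth 0 [seq x <- iota 0 (nsg_bound S + i) | nsg_mem S x] i.-1.

(* conductor: least c such that every integer >= c lies in S *)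
Definition conductor_prop (S : numsg) (c : nat) : bool :=
  all (nsg_mem S) (iota c (nsg_bound S - c)).

Lemma conductor_ex (S : numsg) : exists c, conductor_prop S c.
Proof.
  exists (nsg_bound S); by rewrite /conductor_prop subnn.
Qed.

Definition conductor (S : numsg) : nat := ex_minn (conductor_ex S).

Definition Arf (S : numsg) : Prop :=
  forall i j k, 1 <= k -> k <= j -> j <= i ->
    nsg_mem S (rho S i + rho S j - rho S k).

Definition inA (S : numsg) (x p : nat) : bool :=
  [&& nsg_mem S p, p <= x & nsg_mem S (x - p)].

Definition beta_cond (S : numsg) (x j : nat) : bool :=
  all (fun i => inA S x (rho S i)) (iota 1 j) && (2 * rho S j <= x).

(* beta(x) = max { j >= 1 : beta_cond }.  Since rho_j >= j - 1, any such j
   satisfies j <= x + 1, so the max over [1, x+1] is the max over all j. *)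
Definition beta (S : numsg) (x : nat) : nat :=
  \max_(1 <= j < x.+2 | beta_cond S x j) j.

From mathcomp Require Import all_boot.
From mathcomp Require Import zify.

(* In an Arf semigroup, [beta x >= j] says exactly that [x = rho_j + rho_k] for
   some [k >= j]: if [rho_1, ..., rho_j] lie in [A[x]] then [x - rho_j] is some
   [rho_k], and [2 rho_j <= x] forces [k >= j]; conversely the Arf property puts
   [rho_j + rho_k - rho_i] in [S] for every [i <= j].  Below [c + rho_(t+1)] the
   admissible [k] are exactly those with [rho_k < c = rho_r], i.e. [k < r]. *)

Section NumericalSemigroup.
Variable S : numsg.

Let below (N : nat) : seq nat := [seq x <- iota 0 N | nsg_mem S x].

Lemma nth_below_leq {N1 N2 i} :
  N1 <= N2 -> i < size (below N1) -> nth 0 (below N1) i = nth 0 (below N2) i.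
Proof. by move=> le12 lti; rewrite /below -(subnKC le12) iotaD filter_cat nth_cat lti. Qed.

Lemma size_below N : N - nsg_bound S <= size (below N).
Proof.
have [leN|ltN] := leqP (nsg_bound S) N; last by rewrite (eqP (ltnW ltN)).
rewrite /below -(subnKC leN) iotaD filter_cat size_cat addKn.
have /all_filterP -> : all (nsg_mem S) (iota (nsg_bound S) (N - nsg_bound S)).
  by apply/allP => y; rewrite mem_iota => /andP[/nsg_cofinite].
by rewrite size_iota leq_addl.
Qed.

Lemma rho_nth_below N i : i < size (below N) -> rho S i.+1 = nth 0 (below N) i.
Proof.
move=> ltiN; rewrite /rho -/(below _) /=.
have [leN|ltN] := leqP N (nsg_bound S + i.+1); first by rewrite (nth_below_leq leN).
apply: nth_below_leq; first exact: ltnW.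
by have := size_below (nsg_bound S + i.+1); rewrite addKn.
Qed.

Lemma rho_mem i : 0 < i -> nsg_mem S (rho S i).
Proof.
case: i => // i _; set N := nsg_bound S + i.+1.
have ltiN : i < size (below N) by have := size_below N; rewrite addKn.
by have := mem_nth 0 ltiN; rewrite -rho_nth_below // mem_filter => /andP[].
Qed.

Lemma rho_ltn_mono {i j} : 0 < i -> i < j -> rho S i < rho S j.
Proof.
case: i => // i; case: j => // j _; rewrite ltnS => ltij.
set N := nsg_bound S + j.+1.
have ltjN : j < size (below N) by have := size_below N; rewrite addKn.
have ltiN := ltn_trans ltij ltjN.
rewrite !(rho_nth_below N) //.
have sorted_below : sorted ltn (below N).
  by apply: sorted_filter; [exact: ltn_trans | exact: iota_ltn_sorted].
exact: (sorted_ltn_nth ltn_trans 0 sorted_below).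
Qed.

Lemma ltn_rho {i j} : 0 < i -> 0 < j -> (rho S i < rho S j) = (i < j).
Proof.
move=> i0 j0; case: (ltngtP i j) => [ltij|ltji|->]; last exact: ltnn.
- exact: rho_ltn_mono.
- by rewrite ltnNge ltnW // rho_ltn_mono.
Qed.

Lemma leq_rho {i j} : 0 < i -> 0 < j -> (rho S i <= rho S j) = (i <= j).
Proof. by move=> i0 j0; rewrite leqNgt ltn_rho // -leqNgt. Qed.

Lemma leq_rho_succ i : i <= rho S i.+1.
Proof.
elim: i => [|i IH]; first exact: leq0n.
exact: leq_ltn_trans IH (rho_ltn_mono (ltn0Sn i) (ltnSn _)).
Qed.

Lemma rhoP y : nsg_mem S y -> exists2 k, 0 < k & y = rho S k.
Proof.
move=> Sy; have yin : y \in below y.+1 by rewrite /below mem_filter Sy mem_iota add0n ltnSn.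
exists (index y (below y.+1)).+1 => //.
by rewrite (rho_nth_below y.+1) ?nth_index ?index_mem.
Qed.

Lemma beta_condW x i j : 0 < i <= j -> beta_cond S x j -> beta_cond S x i.
Proof.
case/andP=> i0 leij /andP[/allP Ajx le2j]; apply/andP; split.
  by apply/allP => k; rewrite mem_iota => lek; apply: Ajx; rewrite mem_iota; lia.
have j0 := leq_trans i0 leij.
by apply: leq_trans _ le2j; rewrite leq_mul2l leq_rho ?leij ?orbT.
Qed.

Lemma leq_beta x j : 0 < j -> (j <= beta S x) = beta_cond S x j.
Proof.
move=> j0; apply/idP/idP => [lejb | condj].
  apply: contraLR lejb => ncondj; rewrite -ltnNge -(prednK j0) ltnS.
  apply/bigmax_leqP_seq => i _ condi; rewrite -ltnS prednK // ltnNge.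
  by apply: contra ncondj => leji; apply: beta_condW condi; rewrite j0.
apply: (@leq_bigmax_seq _ _ _ id j _ condj); rewrite mem_index_iota j0 /=.
case/andP: condj => _ le2j; have := leq_rho_succ j.-1.
by rewrite prednK // => lej; lia.
Qed.

Lemma beta_cond_sumP x j : Arf S -> 0 < j ->
  beta_cond S x j <-> exists2 k, j <= k & x = rho S j + rho S k.
Proof.
move=> arfS j0; split.
- case/andP=> /allP Ajx le2j.
  have /and3P[_ lejx /rhoP[k k0 xjk]] : inA S x (rho S j) by apply: Ajx; rewrite mem_iota; lia.
  exists k; last lia.
  by rewrite -leq_rho //; lia.
- case=> k lejk ->; apply/andP; split; last first.
    by have := leq_rho j0 (leq_trans j0 lejk); rewrite lejk; lia.
  apply/allP => i; rewrite mem_iota add1n ltnS => /andP[i0 leij].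
  have le_rho : rho S i <= rho S j by rewrite leq_rho.
  apply/and3P; split; [exact: rho_mem | lia |].
  by rewrite addnC; apply: arfS.
Qed.

End NumericalSemigroup.

Theorem mainTheorem14 (S : numsg) (r d t : nat) :
  Arf S ->
  1 <= r -> conductor S = rho S r ->
  1 <= d -> d <= 2 * r - 3 -> d = 2 * t + 1 ->
  forall x : nat,
    (x <= conductor S + rho S t.+1 - 1 /\ nsg_mem S x /\ t.+1 <= beta S x) <->
    (exists2 k, t.+1 <= k <= r - 1 & x = rho S t.+1 + rho S k).
Proof.
move=> arfS r0 -> d0 ler dt x.
(* The constraints on [d] only serve to give [t + 2 <= r], so that [rho_r > 0]
   and the truncated subtraction in [c + rho_(t+1) - 1] is a genuine one. *)
have ltr : rho S t.+1 < rho S r by rewrite ltn_rho //; lia.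
rewrite leq_beta // beta_cond_sumP //; split.
- case=> lex [_ [k lek xE]]; exists k => //.
  have ltkr : rho S k < rho S r by lia.
  by rewrite lek /= subn1 -ltnS prednK // -(ltn_rho S) // (leq_ltn_trans (leq0n t) lek).
- case=> k /andP[lek ltk] ->.
  have k0 : 0 < k := leq_ltn_trans (leq0n t) lek.
  have : rho S k < rho S r by rewrite ltn_rho //; lia.
  split; first lia.
  by split; [apply: nsg_add; exact: rho_mem | exists k].
Qed.
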